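(* Let $\langle \mathscr{A} \mid \mathscr{R} \rangle$ be a $C(2)$ monoid presentation and let $u$ be a relation word. Then for any $v \in \mathscr{A}^*$ we have $u \equiv_\mathscr{R} v$ if and only if there exist $n \geq 1$ and words $u = u_1, u_2, \dots, u_n = v$ such that for each $1 \leq i < n$ either $(u_i, u_{i+1}) \in \mathscr{R}$ or $(u_{i+1}, u_i) \in \mathscr{R}$.
   Context: A monoid presentation $\langle \mathscr{A} \mid \mathscr{R} \rangle$ consists of an alphabet $\mathscr{A}$ and a set $\mathscr{R} \subseteq \mathscr{A}^* \times \mathscr{A}^*$ of relations; $\equiv_\mathscr{R}$ denotes the smallest congruence on the free monoid $\mathscr{A}^*$ containing $\mathscr{R}$, and the monoid presented is $\mathscr{A}^*/\equiv_\mathscr{R}$. A relation word is a word occurring as one side of a relation in $\mathscr{R}$. A piece is a word which occurs as a factor of two distinct relation words, or in two different (possibly overlapping) positions within one relation word; by convention the empty word is always a piece. For a positive integer $n$, the presentation is $C(n)$ if no relation word can be written as a product of strictly fewer than $n$ pieces. *)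

From mathcomp Require Import all_boot.
Set Implicit Arguments. Unset Strict Implicit. Unset Printing Implicit Defensive.

Section Presentations.
Variable A : eqType.
Implicit Types (R : seq A -> seq A -> Prop) (u v w x : seq A).

Definition relation_word R w : Prop := exists v, R w v \/ R v w.

Definition factor x w : Prop := exists p s, w = p ++ x ++ s.

Definition piece R x : Prop :=
  x = [::]
  \/ (exists w1 w2, [/\ relation_word R w1, relation_word R w2, w1 <> w2,
                        factor x w1 & factor x w2])
  \/ (exists w p1 s1 p2 s2, [/\ relation_word R w, w = p1 ++ x ++ s1,
                               w = p2 ++ x ++ s2 & size p1 <> size p2]).

Definition C_cond R (n : nat) : Prop :=
  forall w (ps : seq (seq A)), relation_word R w ->
    size ps < n -> (forall x, x \in ps -> piece R x) -> w <> flatten ps.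

Definition is_congruence (E : seq A -> seq A -> Prop) : Prop :=
  [/\ forall u, E u u,
      forall u v, E u v -> E v u,
      forall u v w, E u v -> E v w -> E u w
    & forall u v p s, E u v -> E (p ++ u ++ s) (p ++ v ++ s)].

Definition cong_R R u v : Prop :=
  forall E, is_congruence E -> (forall a b, R a b -> E a b) -> E u v.

End Presentations.

From mathcomp Require Import all_boot.
From Stdlib Require Import Lia.
From mathcomp Require Import zify.

Set Implicit Arguments.
Unset Strict Implicit.
Unset Printing Implicit Defensive.

(* In a C(2) presentation no relation word is a proper factor of another
   relation word (else the smaller one would be a single piece).  Hence an
   elementary transition p l s -> p r s applied to a relation word must have
   p = s = [::], i.e. it is a relation applied to the whole word, and its
   result is again a relation word.  So the words reachable from a relation
   word u by elementary transitions, i.e. its class under the congruence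
   generated by R, are exactly those reachable by whole-word relations. *)

Section Presentation.
Variables (A : eqType) (R : seq A -> seq A -> Prop).

Inductive elem_equiv : seq A -> seq A -> Prop :=
| elem_step p l r s : R l r \/ R r l -> elem_equiv (p ++ l ++ s) (p ++ r ++ s)
| elem_refl x : elem_equiv x x
| elem_sym x y : elem_equiv x y -> elem_equiv y x
| elem_trans x y z : elem_equiv x y -> elem_equiv y z -> elem_equiv x z.

Lemma elem_equiv_congruence : is_congruence elem_equiv.
Proof.
split; [exact: elem_refl | exact: elem_sym | exact: elem_trans |].
move=> u v p s; elim=> {u v} [p' l r s' lr | x | x y _ | x y z _ xy _ yz].
- by have := elem_step (p ++ p') (s' ++ s) lr; rewrite -!catA.
- exact: elem_refl.
- exact: elem_sym.
- exact: elem_trans xy yz.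
Qed.

Lemma cong_R_elem_equiv u v : cong_R R u v -> elem_equiv u v.
Proof.
apply; first exact: elem_equiv_congruence.
by move=> a b ab; have := elem_step [::] [::] (or_introl ab); rewrite /= !cats0.
Qed.

Lemma relation_word_rel l r : R l r \/ R r l -> relation_word R l /\ relation_word R r.
Proof. by case=> lr; split; [exists r; left | exists l; right | exists r; right | exists l; left]. Qed.

Lemma C2_relation_word_factor w p l s :
  C_cond R 2 -> relation_word R w -> relation_word R l ->
  w = p ++ l ++ s -> p = [::] /\ s = [::].
Proof.
move=> C2 rw_w rw_l def_w; have [eq_lw | neq_lw] := eqVneq l w.
  have : size w = size p + size l + size s by rewrite def_w !size_cat addnA.
  by rewrite eq_lw => size_w; split; apply/size0nil; lia.
have piece_l : piece R l.
  right; left; exists l, w; split => //; first exact/eqP.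
    by exists [::], [::]; rewrite cats0.
  by exists p, s.
exfalso; apply: (C2 l [:: l] rw_l) => //; last by rewrite /= cats0.
by move=> x; rewrite inE => /eqP ->.
Qed.

Definition rel_chain u v : Prop :=
  exists (n : nat) (f : nat -> seq A),
    [/\ 1 <= n, f 1 = u, f n = v &
        forall i, 1 <= i < n -> R (f i) (f i.+1) \/ R (f i.+1) (f i)].

Lemma rel_chain_refl u : rel_chain u u.
Proof. by exists 1, (fun=> u); split => // i /andP[i_gt0]; rewrite ltnNge i_gt0. Qed.

Lemma rel_chain_rcons u x y : rel_chain u x -> R x y \/ R y x -> rel_chain u y.
Proof.
case=> n [f [n_gt0 f1 fn f_step]] xy.
exists n.+1, (fun i => if i == n.+1 then y else f i); split => //.
- by rewrite ltn_eqF.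
- by rewrite eqxx.
move=> i /andP[i_gt0 i_le_n]; rewrite eqSS ltn_eqF //.
have [-> | neq_in] := eqVneq i n; first by rewrite fn.
by apply: f_step; rewrite i_gt0 ltn_neqAle neq_in.
Qed.

Lemma rel_chain_relation_word u x :
  relation_word R u -> rel_chain u x -> relation_word R x.
Proof.
move=> rw_u [[|[|n]] [f [//= _ f1 fn f_step]]]; first by rewrite -fn f1.
by have := f_step n.+1 (ltnSn _); rewrite fn => /relation_word_rel[].
Qed.

Lemma rel_chain_cong_R u v : rel_chain u v -> cong_R R u v.
Proof.
case=> n [f [n_gt0 <- <- f_step]] E [E_refl E_sym E_trans _] E_R.
elim: n n_gt0 f_step => // -[_ _ _ | n IHn _ f_step]; first exact: E_refl.
apply: (E_trans _ (f n.+1)).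
  by apply: IHn => // i /andP[i_gt0 lt_in]; apply: f_step; rewrite i_gt0 ltnW.
by case: (f_step n.+1 (ltnSn _)) => [/E_R | /E_R /E_sym].
Qed.

Lemma C2_rel_chain_elem_equiv u x y :
  C_cond R 2 -> relation_word R u -> elem_equiv x y ->
  rel_chain u x <-> rel_chain u y.
Proof.
move=> C2 rw_u; elim=> {x y} [p l r s lr | x | x y _ | x y z _ xy _ yz]; try tauto.
have [rw_l rw_r] := relation_word_rel lr.
have whole l' r' : R l' r' \/ R r' l' -> relation_word R l' ->
    rel_chain u (p ++ l' ++ s) -> rel_chain u (p ++ r' ++ s).
  move=> l'r' rw_l' ch; have rw_w := rel_chain_relation_word rw_u ch.
  have [p0 s0] := C2_relation_word_factor C2 rw_w rw_l' erefl.
  by move: ch; rewrite p0 s0 /= !cats0 => /rel_chain_rcons; apply.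
by split; apply: whole => //; case: lr; [right | left].
Qed.

End Presentation.

Theorem proposition3 (A : eqType) (R : seq A -> seq A -> Prop) (u : seq A) :
  C_cond R 2 -> relation_word R u ->
  forall v : seq A,
    cong_R R u v <->
    exists (n : nat) (f : nat -> seq A),
      [/\ 1 <= n, f 1 = u, f n = v &
          forall i, 1 <= i < n -> R (f i) (f i.+1) \/ R (f i.+1) (f i)].
Proof.
move=> C2 rw_u v; split => [/cong_R_elem_equiv uv | /rel_chain_cong_R //].
by apply/(C2_rel_chain_elem_equiv C2 rw_u uv); apply: rel_chain_refl.
Qed.
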